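(* Let $B$ be a semiring and let $(A,B,p',s')$, $(D,B,p,s)$, $(C,B,p'',s'')$ be Schreier split epimorphisms of semirings. Let $f\colon A\to D$ and $g\colon C\to D$ be semiring homomorphisms with $pf=p'$, $fs'=s$, $pg=p''$, $gs''=s$. Let $H=\mathrm{Ker}(p')$, $K=\mathrm{Ker}(p)$, $L=\mathrm{Ker}(p'')$, and let $f|_H\colon H\to K$, $g|_L\colon L\to K$ be the restrictions. If $D$ is generated as a semiring by $f(A)\cup g(C)$, then $K$ is generated as a semiring by $f(H)\cup g(L)$. Consequently the kernel functor $\mathrm{Ker}_B\colon SPt_B(\mathsf{SRng})\to\mathsf{SRng}$ preserves jointly strongly epimorphic pairs.
   Context: A semiring is a set with a commutative monoid structure $(+,0)$ and an associative (not necessarily unital) multiplication distributing over $+$ on both sides, with $0x=x0=0$. A split epimorphism $(A,B,f,s)$ of semirings ($fs=1_B$) is Schreier if each $a\in A$ can be written uniquely as $a=\alpha+sf(a)$ with $f(\alpha)=0$. $SPt_B(\mathsf{SRng})$ is the category of Schreier split epimorphisms with codomain $B$, morphisms commuting with the projections and sections. $\mathrm{Ker}_B$ sends such a point to the kernel $f^{-1}(0)$. A pair of morphisms with common codomain is jointly strongly epimorphic if whenever both factor through a monomorphism $m$, $m$ is an isomorphism. *)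

(* a bespoke (non-unital) semiring structure, since MathComp's
   semiring structures are unital. *)
From Stdlib Require Import ProofIrrelevance.
Set Implicit Arguments.
Unset Strict Implicit.

Record Semiring := {
  car :> Type;
  sadd : car -> car -> car;
  szero : car;
  smul : car -> car -> car;
  saddA : forall x y z, sadd x (sadd y z) = sadd (sadd x y) z;
  saddC : forall x y, sadd x y = sadd y x;
  sadd0 : forall x, sadd szero x = x;
  smulA : forall x y z, smul x (smul y z) = smul (smul x y) z;
  smulDl : forall x y z, smul (sadd x y) z = sadd (smul x z) (smul y z);
  smulDr : forall x y z, smul x (sadd y z) = sadd (smul x y) (smul x z);
  smul0l : forall x, smul szero x = szero;
  smul0r : forall x, smul x szero = szero }.

Arguments sadd {_} _ _.
Arguments szero {_}.
Arguments smul {_} _ _.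

Record hom (R S : Semiring) := {
  hfun :> R -> S;
  hom_add : forall x y, hfun (sadd x y) = sadd (hfun x) (hfun y);
  hom_zero : hfun szero = szero;
  hom_mul : forall x y, hfun (smul x y) = smul (hfun x) (hfun y) }.

Inductive gen (R : Semiring) (X : R -> Prop) : R -> Prop :=
| gen_in : forall x, X x -> gen X x
| gen_zero : gen X szero
| gen_add : forall x y, gen X x -> gen X y -> gen X (sadd x y)
| gen_mul : forall x y, gen X x -> gen X y -> gen X (smul x y).

Record Point (B : Semiring) := {
  pcar : Semiring;
  proj : hom pcar B;
  sect : hom B pcar;
  proj_sect : forall b, proj (sect b) = b;
  schreier : forall a : pcar,
      exists! alpha : pcar, proj alpha = szero /\ a = sadd alpha (sect (proj a)) }.

Record pmor (B : Semiring) (X Y : Point B) := {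
  pm :> hom (pcar X) (pcar Y);
  pm_proj : forall a, proj Y (pm a) = proj X a;
  pm_sect : forall b, pm (sect X b) = sect Y b }.

Lemma sig_eq (A : Type) (P : A -> Prop) (x y : sig P) :
  proj1_sig x = proj1_sig y -> x = y.
Proof.
  destruct x as [x px], y as [y py]; simpl; intros ->.
  f_equal; apply proof_irrelevance.
Qed.

Section Kernel.
Variable B : Semiring.
Variable X : Point B.

Definition kcar := { a : pcar X | proj X a = szero }.

Lemma kadd_proof (a b : kcar) :
  proj X (sadd (proj1_sig a) (proj1_sig b)) = szero.
Proof.
  destruct a as [a pa], b as [b pb]; simpl.
  rewrite hom_add, pa, pb; apply sadd0.
Qed.
Definition kadd (a b : kcar) : kcar := exist _ _ (kadd_proof a b).

Lemma kmul_proof (a b : kcar) :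
  proj X (smul (proj1_sig a) (proj1_sig b)) = szero.
Proof.
  destruct a as [a pa], b as [b pb]; simpl.
  rewrite hom_mul, pa, pb; apply smul0l.
Qed.
Definition kmul (a b : kcar) : kcar := exist _ _ (kmul_proof a b).

Definition kzero : kcar := exist _ szero (hom_zero (proj X)).

Definition KerS : Semiring.
Proof.
  refine (@Build_Semiring kcar kadd kzero kmul _ _ _ _ _ _ _ _);
    intros; apply sig_eq; simpl.
  - apply saddA.
  - apply saddC.
  - apply sadd0.
  - apply smulA.
  - apply smulDl.
  - apply smulDr.
  - apply smul0l.
  - apply smul0r.
Defined.
End Kernel.

Section KerMap.
Variable B : Semiring.
Variables X Y : Point B.
Variable f : pmor X Y.

Lemma kmap_proof (h : KerS X) : proj Y (f (proj1_sig h)) = szero.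
Proof. rewrite pm_proj; exact (proj2_sig h). Qed.

Definition kmap_fun (h : KerS X) : KerS Y := exist _ _ (kmap_proof h).

Definition Kmap : hom (KerS X) (KerS Y).
Proof.
  refine (@Build_hom (KerS X) (KerS Y) kmap_fun _ _ _);
    intros; apply sig_eq; simpl.
  - apply hom_add.
  - apply hom_zero.
  - apply hom_mul.
Defined.
End KerMap.

Definition mono_SR (N M : Semiring) (m : hom N M) : Prop :=
  forall (Z : Semiring) (h1 h2 : hom Z N),
    (forall z, m (h1 z) = m (h2 z)) -> forall z, h1 z = h2 z.

Definition iso_SR (N M : Semiring) (m : hom N M) : Prop :=
  exists m' : hom M N, (forall x, m' (m x) = x) /\ (forall y, m (m' y) = y).

Definition jse_SR (X Y M : Semiring) (u : hom X M) (v : hom Y M) : Prop :=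
  forall (N : Semiring) (m : hom N M), mono_SR m ->
  forall (u' : hom X N) (v' : hom Y N),
    (forall x, m (u' x) = u x) -> (forall y, m (v' y) = v y) -> iso_SR m.

Definition mono_Pt (B : Semiring) (N M : Point B) (m : pmor N M) : Prop :=
  forall (Z : Point B) (h1 h2 : pmor Z N),
    (forall z, m (h1 z) = m (h2 z)) -> forall z, h1 z = h2 z.

Definition iso_Pt (B : Semiring) (N M : Point B) (m : pmor N M) : Prop :=
  exists m' : pmor M N, (forall x, m' (m x) = x) /\ (forall y, m (m' y) = y).

Definition jse_Pt (B : Semiring) (X Y M : Point B) (u : pmor X M) (v : pmor Y M)
  : Prop :=
  forall (N : Point B) (m : pmor N M), mono_Pt m ->
  forall (u' : pmor X N) (v' : pmor Y N),
    (forall x, m (u' x) = u x) -> (forall y, m (v' y) = v y) -> iso_Pt m.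

Definition KerB_preserves_jse (B : Semiring) : Prop :=
  forall (X Y M : Point B) (u : pmor X M) (v : pmor Y M),
    jse_Pt u v -> jse_SR (Kmap u) (Kmap v).

From Stdlib Require Import ClassicalEpsilon.
Set Implicit Arguments.
Unset Strict Implicit.

(* Every element d of a Schreier point decomposes as d = k + s(p d) with k in the
   kernel K.  Decomposing the generators f(a), g(c) of D yields kernel components in
   the subsemiring K' of K generated by f(H) and g(L).  Components of sums add, and
   the component of a product is k1 k2 + k1 s(b2) + s(b1) k2; these stay in K'
   because K' is closed under multiplication by s(B) on both sides, as
   f(h) s(b) = f(h s'(b)).  For d in K we have s(p d) = 0, so d = k lies in K'.

   For the second claim, the subsemiring of D generated by the images of u and v is,
   by the first argument, again a Schreier point through which u and v factor; joint
   strong epimorphicity makes it all of D.  Hence Ker D is generated by the images of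
   Ker u and Ker v, so a monomorphism of semirings (injective, via kernel pairs)
   through which both factor is surjective, hence an isomorphism. *)

Lemma saddACA (R : Semiring) (a b c d : R) :
  sadd (sadd a b) (sadd c d) = sadd (sadd a c) (sadd b d).
Proof.
  rewrite <- !saddA; f_equal; rewrite !saddA; f_equal; apply saddC.
Qed.

Lemma sadd0r (R : Semiring) (x : R) : sadd x szero = x.
Proof. rewrite saddC; apply sadd0. Qed.

Section Generation.
Variables (R : Semiring) (X : R -> Prop).

Lemma gen_closed_right_multiplier (r : R -> R) :
  (forall x y, r (sadd x y) = sadd (r x) (r y)) -> r szero = szero ->
  (forall x y, r (smul x y) = smul x (r y)) ->
  (forall x, X x -> gen X (r x)) -> forall x, gen X x -> gen X (r x).
Proof.
  intros rD r0 rM rX x Gx.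
  induction Gx as [x Xx | | x y _ IHx _ IHy | x y Gx _ _ IHy].
  - exact (rX x Xx).
  - rewrite r0; apply gen_zero.
  - rewrite rD; apply gen_add; assumption.
  - rewrite rM; apply gen_mul; assumption.
Qed.

Lemma gen_closed_left_multiplier (l : R -> R) :
  (forall x y, l (sadd x y) = sadd (l x) (l y)) -> l szero = szero ->
  (forall x y, l (smul x y) = smul (l x) y) ->
  (forall x, X x -> gen X (l x)) -> forall x, gen X x -> gen X (l x).
Proof.
  intros lD l0 lM lX x Gx.
  induction Gx as [x Xx | | x y _ IHx _ IHy | x y _ IHx Gy _].
  - exact (lX x Xx).
  - rewrite l0; apply gen_zero.
  - rewrite lD; apply gen_add; assumption.
  - rewrite lM; apply gen_mul; assumption.
Qed.
End Generation.

Lemma gen_hom (R S : Semiring) (h : hom R S) (X : R -> Prop) (Y : S -> Prop) :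
  (forall x, X x -> Y (h x)) -> forall x, gen X x -> gen Y (h x).
Proof.
  intros XY x Gx.
  induction Gx as [x Xx | | x y _ IHx _ IHy | x y _ IHx _ IHy].
  - apply gen_in; auto.
  - rewrite hom_zero; apply gen_zero.
  - rewrite hom_add; apply gen_add; assumption.
  - rewrite hom_mul; apply gen_mul; assumption.
Qed.

Lemma gen_in_hom_image (R S : Semiring) (h : hom R S) (Y : S -> Prop) :
  (forall y, Y y -> exists x, h x = y) -> forall y, gen Y y -> exists x, h x = y.
Proof.
  intros Yh y Gy.
  induction Gy as [y Yy | | y z _ [x <-] _ [x' <-] | y z _ [x <-] _ [x' <-]].
  - exact (Yh y Yy).
  - exists szero; apply hom_zero.
  - exists (sadd x x'); apply hom_add.
  - exists (smul x x'); apply hom_mul.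
Qed.

Section Subsemiring.
Variables (R : Semiring) (S : R -> Prop).
Hypotheses (S0 : S szero)
  (SD : forall x y, S x -> S y -> S (sadd x y))
  (SM : forall x y, S x -> S y -> S (smul x y)).

Definition subsemiring : Semiring.
Proof.
  refine (@Build_Semiring {x | S x}
            (fun x y => exist _ _ (SD (proj2_sig x) (proj2_sig y)))
            (exist _ _ S0)
            (fun x y => exist _ _ (SM (proj2_sig x) (proj2_sig y)))
            _ _ _ _ _ _ _ _);
    intros; apply sig_eq; simpl.
  - apply saddA.
  - apply saddC.
  - apply sadd0.
  - apply smulA.
  - apply smulDl.
  - apply smulDr.
  - apply smul0l.
  - apply smul0r.
Defined.

Definition subsemiring_incl : hom subsemiring R :=
  @Build_hom subsemiring R (@proj1_sig _ _)
    (fun _ _ => eq_refl) eq_refl (fun _ _ => eq_refl).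
End Subsemiring.

Definition prod_semiring (R S : Semiring) : Semiring.
Proof.
  refine (@Build_Semiring (R * S)
            (fun x y => (sadd (fst x) (fst y), sadd (snd x) (snd y)))
            (szero, szero)
            (fun x y => (smul (fst x) (fst y), smul (snd x) (snd y)))
            _ _ _ _ _ _ _ _);
    intros; apply injective_projections; simpl.
  all: first [apply saddA | apply saddC | apply sadd0 | apply smulA
             | apply smulDl | apply smulDr | apply smul0l | apply smul0r].
Defined.

Section KernelPair.
Variables (N M : Semiring) (m : hom N M).

Definition kernel_pair : Semiring.
Proof.
  refine (@subsemiring (prod_semiring N N) (fun p => m (fst p) = m (snd p)) _ _ _);
    simpl.
  - reflexivity.
  - intros x y Ex Ey; rewrite !hom_add, Ex, Ey; reflexivity.
  - intros x y Ex Ey; rewrite !hom_mul, Ex, Ey; reflexivity.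
Defined.

Definition kernel_pair_fst : hom kernel_pair N :=
  @Build_hom kernel_pair N (fun z => fst (proj1_sig z))
    (fun _ _ => eq_refl) eq_refl (fun _ _ => eq_refl).

Definition kernel_pair_snd : hom kernel_pair N :=
  @Build_hom kernel_pair N (fun z => snd (proj1_sig z))
    (fun _ _ => eq_refl) eq_refl (fun _ _ => eq_refl).

Lemma mono_SR_inj : mono_SR m -> forall x y, m x = m y -> x = y.
Proof.
  intros Hm x y Exy.
  exact (Hm kernel_pair kernel_pair_fst kernel_pair_snd
            (fun z => proj2_sig z) (exist _ (x, y) Exy)).
Qed.
End KernelPair.

Lemma bijective_iso_SR (N M : Semiring) (m : hom N M) :
  (forall x y, m x = m y -> x = y) -> (forall y, exists x, m x = y) -> iso_SR m.
Proof.
  intros m_inj m_surj.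
  set (m' := fun y => proj1_sig (constructive_indefinite_description _ (m_surj y))).
  assert (mK' : forall y, m (m' y) = y)
    by (intro y; exact (proj2_sig (constructive_indefinite_description _ (m_surj y)))).
  unshelve eexists.
  - refine (@Build_hom M N m' _ _ _); intros; apply m_inj.
    + rewrite hom_add, !mK'; reflexivity.
    + rewrite hom_zero, mK'; reflexivity.
    + rewrite hom_mul, !mK'; reflexivity.
  - split; [intro x; apply m_inj, mK' | exact mK'].
Qed.

Section PointKernel.
Variables (B : Semiring) (X : Point B).

Definition ker_incl : hom (KerS X) (pcar X) :=
  @Build_hom (KerS X) (pcar X) (@proj1_sig _ _)
    (fun _ _ => eq_refl) eq_refl (fun _ _ => eq_refl).

Lemma schreier_decomp (a : pcar X) :
  exists k : KerS X, a = sadd (proj1_sig k) (sect X (proj X a)).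
Proof.
  destruct (schreier a) as [alpha [[p_alpha E] _]].
  exists (exist _ alpha p_alpha); exact E.
Qed.

Lemma schreier_decomp_unique (a : pcar X) (k1 k2 : KerS X) :
  a = sadd (proj1_sig k1) (sect X (proj X a)) ->
  a = sadd (proj1_sig k2) (sect X (proj X a)) -> k1 = k2.
Proof.
  intros E1 E2; destruct (schreier a) as [alpha [_ U]]; apply sig_eq.
  rewrite <- (U _ (conj (proj2_sig k1) E1)), <- (U _ (conj (proj2_sig k2) E2)).
  reflexivity.
Qed.

Lemma ker_mulr_sect_proof (k : KerS X) (b : B) :
  proj X (smul (proj1_sig k) (sect X b)) = szero.
Proof. rewrite hom_mul, proj_sect, (proj2_sig k); apply smul0l. Qed.

Definition ker_mulr_sect (k : KerS X) (b : B) : KerS X :=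
  exist _ _ (ker_mulr_sect_proof k b).

Lemma ker_mull_sect_proof (b : B) (k : KerS X) :
  proj X (smul (sect X b) (proj1_sig k)) = szero.
Proof. rewrite hom_mul, proj_sect, (proj2_sig k); apply smul0r. Qed.

Definition ker_mull_sect (b : B) (k : KerS X) : KerS X :=
  exist _ _ (ker_mull_sect_proof b k).
End PointKernel.

Lemma Kmap_mulr_sect (B : Semiring) (X Y : Point B) (f : pmor X Y) k b :
  Kmap f (ker_mulr_sect k b) = ker_mulr_sect (Kmap f k) b.
Proof. apply sig_eq; simpl; rewrite hom_mul, pm_sect; reflexivity. Qed.

Lemma Kmap_mull_sect (B : Semiring) (X Y : Point B) (f : pmor X Y) b k :
  Kmap f (ker_mull_sect b k) = ker_mull_sect b (Kmap f k).
Proof. apply sig_eq; simpl; rewrite hom_mul, pm_sect; reflexivity. Qed.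

Lemma pmor_schreier_decomp (B : Semiring) (X Y : Point B) (u : pmor X Y)
    (a : pcar X) (k : KerS X) :
  a = sadd (proj1_sig k) (sect X (proj X a)) ->
  u a = sadd (proj1_sig (Kmap u k)) (sect Y (proj Y (u a))).
Proof.
  intros E; simpl; rewrite pm_proj, <- (pm_sect u), <- hom_add, <- E; reflexivity.
Qed.

Section KernelGeneration.
Variables (B : Semiring) (A D C : Point B) (f : pmor A D) (g : pmor C D).

Definition image_gens (x : pcar D) : Prop :=
  (exists a, f a = x) \/ (exists c, g c = x).

Definition ker_image_gens (y : KerS D) : Prop :=
  (exists h, Kmap f h = y) \/ (exists l, Kmap g l = y).

Lemma gen_ker_image_mulr_sect (b : B) (k : KerS D) :
  gen ker_image_gens k -> gen ker_image_gens (ker_mulr_sect k b).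
Proof.
  apply (gen_closed_right_multiplier (r := fun k => ker_mulr_sect k b)).
  - intros; apply sig_eq; apply smulDl.
  - apply sig_eq; apply smul0l.
  - intros; apply sig_eq; symmetry; apply smulA.
  - intros y [[h <-] | [l <-]]; apply gen_in;
      [left; exists (ker_mulr_sect h b) | right; exists (ker_mulr_sect l b)];
      apply Kmap_mulr_sect.
Qed.

Lemma gen_ker_image_mull_sect (b : B) (k : KerS D) :
  gen ker_image_gens k -> gen ker_image_gens (ker_mull_sect b k).
Proof.
  apply (gen_closed_left_multiplier (l := ker_mull_sect b)).
  - intros; apply sig_eq; apply smulDr.
  - apply sig_eq; apply smul0r.
  - intros; apply sig_eq; apply smulA.
  - intros y [[h <-] | [l <-]]; apply gen_in;
      [left; exists (ker_mull_sect b h) | right; exists (ker_mull_sect b l)];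
      apply Kmap_mull_sect.
Qed.

Lemma gen_image_decomp (d : pcar D) :
  gen image_gens d ->
  exists k : KerS D, gen ker_image_gens k /\ d = sadd (proj1_sig k) (sect D (proj D d)).
Proof.
  induction 1 as [x Hx | | x y _ [k1 [G1 E1]] _ [k2 [G2 E2]]
                 | x y _ [k1 [G1 E1]] _ [k2 [G2 E2]]].
  - destruct Hx as [[a <-] | [c <-]].
    + destruct (schreier_decomp a) as [h E].
      exists (Kmap f h); split; [apply gen_in; left; eauto |].
      exact (pmor_schreier_decomp f E).
    + destruct (schreier_decomp c) as [l E].
      exists (Kmap g l); split; [apply gen_in; right; eauto |].
      exact (pmor_schreier_decomp g E).
  - exists szero; split; [apply gen_zero |]; simpl.
    rewrite !hom_zero, sadd0; reflexivity.
  - exists (sadd k1 k2); split; [apply gen_add; assumption |].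
    rewrite hom_add, hom_add, E1, E2 at 1; apply saddACA.
  - set (b1 := proj D x) in E1; set (b2 := proj D y) in E2.
    exists (sadd (sadd (smul k1 k2) (ker_mulr_sect k1 b2)) (ker_mull_sect b1 k2)).
    split.
    + apply gen_add; [apply gen_add; [apply gen_mul |] |]; try assumption.
      * apply gen_ker_image_mulr_sect; assumption.
      * apply gen_ker_image_mull_sect; assumption.
    + rewrite hom_mul, hom_mul, E1, E2 at 1; simpl.
      rewrite smulDl, !smulDr; apply saddA.
Qed.

Lemma ker_gen_of_gen :
  (forall d, gen image_gens d) -> forall k : KerS D, gen ker_image_gens k.
Proof.
  intros Gall k.
  destruct (gen_image_decomp (Gall (proj1_sig k))) as [k' [Gk' E]].
  replace k with k'; [exact Gk' |].
  apply sig_eq; rewrite E, (proj2_sig k), hom_zero, sadd0r; reflexivity.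
Qed.
End KernelGeneration.

Section SubPoint.
Variables (B : Semiring) (M : Point B) (S : pcar M -> Prop).
Hypotheses (S0 : S szero)
  (SD : forall x y, S x -> S y -> S (sadd x y))
  (SM : forall x y, S x -> S y -> S (smul x y))
  (S_sect : forall b, S (sect M b))
  (S_decomp : forall a, S a -> exists k : KerS M,
       S (proj1_sig k) /\ a = sadd (proj1_sig k) (sect M (proj M a))).

Definition subpoint_proj : hom (subsemiring S0 SD SM) B.
Proof.
  refine (@Build_hom (subsemiring S0 SD SM) B (fun a => proj M (proj1_sig a)) _ _ _);
    intros; simpl.
  - apply hom_add.
  - apply hom_zero.
  - apply hom_mul.
Defined.

Definition subpoint_sect : hom B (subsemiring S0 SD SM).
Proof.
  refine (@Build_hom B (subsemiring S0 SD SM) (fun b => exist _ _ (S_sect b)) _ _ _);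
    intros; apply sig_eq; simpl.
  - apply hom_add.
  - apply hom_zero.
  - apply hom_mul.
Defined.

Lemma subpoint_schreier (a : subsemiring S0 SD SM) :
  exists! alpha, subpoint_proj alpha = szero /\
                 a = sadd alpha (subpoint_sect (subpoint_proj a)).
Proof.
  destruct (S_decomp (proj2_sig a)) as [k [Sk E]].
  exists (exist _ (proj1_sig k) Sk); split.
  - split; [exact (proj2_sig k) | apply sig_eq; exact E].
  - intros alpha [p_alpha E'].
    apply sig_eq; simpl.
    refine (f_equal (@proj1_sig _ _)
              (schreier_decomp_unique (k1 := k) (k2 := exist _ _ p_alpha) E _)).
    exact (f_equal (@proj1_sig _ _) E').
Qed.

Definition subpoint : Point B :=
  @Build_Point B (subsemiring S0 SD SM) subpoint_proj subpoint_sect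
    (proj_sect M) subpoint_schreier.

Definition subpoint_incl : pmor subpoint M :=
  @Build_pmor B subpoint M (subsemiring_incl S0 SD SM)
    (fun _ => eq_refl) (fun _ => eq_refl).

Lemma subpoint_incl_mono : mono_Pt subpoint_incl.
Proof. intros Z h1 h2 E z; apply sig_eq; exact (E z). Qed.

Definition subpoint_corestr (X : Point B) (u : pmor X M) (Su : forall x, S (u x)) :
  pmor X subpoint.
Proof.
  unshelve refine (@Build_pmor B X subpoint _ _ _).
  - refine (@Build_hom (pcar X) (subsemiring S0 SD SM)
              (fun x => exist _ (u x) (Su x)) _ _ _);
      intros; apply sig_eq; simpl.
    + apply hom_add.
    + apply hom_zero.
    + apply hom_mul.
  - intro; apply pm_proj.
  - intro; apply sig_eq, pm_sect.
Defined.
End SubPoint.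

Lemma jse_Pt_gen (B : Semiring) (X Y M : Point B) (u : pmor X M) (v : pmor Y M) :
  jse_Pt u v -> forall y, gen (image_gens u v) y.
Proof.
  intros Huv y.
  assert (S_sect : forall b, gen (image_gens u v) (sect M b))
    by (intro b; apply gen_in; left; exists (sect X b); apply pm_sect).
  assert (S_decomp : forall a, gen (image_gens u v) a -> exists k : KerS M,
            gen (image_gens u v) (proj1_sig k) /\
            a = sadd (proj1_sig k) (sect M (proj M a))).
  { intros a Ga; destruct (gen_image_decomp Ga) as [k [Gk E]].
    exists k; split; [| exact E].
    apply (gen_hom (h := ker_incl M) (X := ker_image_gens u v)); [| exact Gk].
    intros _ [[h <-] | [l <-]]; [left | right]; eexists; reflexivity. }
  assert (Gu : forall x, gen (image_gens u v) (u x))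
    by (intro x; apply gen_in; left; exists x; reflexivity).
  assert (Gv : forall x, gen (image_gens u v) (v x))
    by (intro x; apply gen_in; right; exists x; reflexivity).
  pose (S0 := gen_zero (image_gens u v)).
  destruct (Huv _ _
                (subpoint_incl_mono (S0 := S0) (S_sect := S_sect) (S_decomp := S_decomp))
                (subpoint_corestr S0 (@gen_add _ _) (@gen_mul _ _) S_sect S_decomp Gu)
                (subpoint_corestr S0 (@gen_add _ _) (@gen_mul _ _) S_sect S_decomp Gv)
                (fun _ => eq_refl) (fun _ => eq_refl))
    as [incl' [_ inclK']].
  rewrite <- (inclK' y); exact (proj2_sig (incl' y)).
Qed.

Lemma Kmap_preserves_jse (B : Semiring) : KerB_preserves_jse B.
Proof.
  intros X Y M u v Huv N m Hm u' v' Hu' Hv'.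
  apply bijective_iso_SR; [exact (mono_SR_inj Hm) |].
  intro k; apply (gen_in_hom_image (h := m) (Y := ker_image_gens u v)).
  - intros _ [[h <-] | [l <-]]; eauto.
  - exact (ker_gen_of_gen (jse_Pt_gen Huv) k).
Qed.

Theorem mainTheorem6 (B : Semiring) :
  (forall (A D C : Point B) (f : pmor A D) (g : pmor C D),
     (forall d : pcar D,
        gen (fun x : pcar D => (exists a, f a = x) \/ (exists c, g c = x)) d) ->
     forall k : KerS D,
        gen (fun y : KerS D => (exists h, Kmap f h = y) \/ (exists l, Kmap g l = y)) k)
  /\ KerB_preserves_jse B.
Proof.
  split.
  - exact (@ker_gen_of_gen B).
  - exact (@Kmap_preserves_jse B).
Qed.
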